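(* For every modulo predicate $\psi:\mathbb{N}^{\Sigma}\to\{0,1\}$, i.e. a predicate for which there exist $\mathbf{a}\in\mathbb{Z}^{\Sigma}$, $b\in\mathbb{Z}$ and $m\in\mathbb{Z}_{>0}$ with $\psi(\mathbf{x})=1\iff\mathbf{a}\cdot\mathbf{x}\equiv b\pmod m$, there exists a leaderless CRD that haltingly decides $\psi$ (under a weakly fair scheduler) whose halting runtime is $O(n)$.
   Context: CRN model: $\Pi=(\mathcal{S},\mathcal{R})$, finite species set, finite reaction set $\mathcal{R}\subset\mathbb{N}^{\mathcal{S}}\times\mathbb{N}^{\mathcal{S}}$; reactions $(\mathbf{r},\mathbf{p})$ with $\|\mathbf{r}\|_1\in\{1,2\}$, $\|\mathbf{r}\|_1\le\|\mathbf{p}\|_1$; every $\mathbf{r}$ with $1\le\|\mathbf{r}\|_1\le2$ has a nonempty set $\mathcal{R}(\mathbf{r})$ of reactions; void reactions ($\mathbf{r}=\mathbf{p}$) alone in their $\mathcal{R}(\mathbf{r})$; $\operatorname{NV}(\mathcal{R})$ non-void; finite density. Configurations $\mathbf{c}\in\mathbb{N}^{\mathcal{S}}$, $\|\mathbf{c}\|_1\ge1$; applicability $\mathbf{r}\le\mathbf{c}$, result $\mathbf{c}-\mathbf{r}+\mathbf{p}$; reachability $\stackrel{*}{\rightharpoonup}$; $\mathrm{halt}(Z)=\{\mathbf{c}\in Z:\mathbf{c}\stackrel{*}{\rightharpoonup}\mathbf{c}'\Rightarrow\mathbf{c}'=\mathbf{c}\}$. Weakly fair execution $\langle\mathbf{c}^t,\alpha^t\rangle$: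 every reaction applicable at step $t$ is later scheduled or becomes inapplicable. Halts into $Z$ at the first $t$ with $\mathbf{c}^t\in\mathrm{halt}(Z)$. CRD: input species $\Sigma\subset\mathcal{S}$, disjoint voters $\Upsilon_0,\Upsilon_1$, fuel $F\in\mathcal{S}\setminus\Sigma$, context $\mathbf{k}$ (leaderless: $\mathbf{k}=\mathbf{0}$); valid initial configurations agree with $\mathbf{k}$ off $\Sigma\cup\{F\}$ and have $\mathbf{c}^0(F)\ge1$; $\mathcal{D}_v=\{\mathbf{c}:\mathbf{c}(\Upsilon_v)>0,\mathbf{c}(\Upsilon_{1-v})=0\}$; $\Pi$ haltingly decides $\psi$ if for every $\mathbf{x}\in\mathbb{N}^{\Sigma}$, every weakly fair execution from every valid $\mathbf{c}^0$ with $\mathbf{c}^0|_\Sigma=\mathbf{x}$ halts into $\mathcal{D}_{\psi(\mathbf{x})}$. Runtime: stochastic scheduler with volume $\varphi=\Theta(n)$, $n=\|\mathbf{c}^0\|_1$; propensity $\pi_{\mathbf{c}}(\alpha)=\mathbf{c}(A)/|\mathcal{R}(\mathbf{r})|$ ($\mathbf{r}=A$), $\frac1\varphi\binom{\mathbf{c}(A)}2/|\mathcal{R}(\mathbf{r})|$ ($\mathbf{r}=2A$), $\frac1\varphi\mathbf{c}(A)\mathbf{c}(B)/|\mathcal{R}(\mathbf{r})|$ ($\mathbf{r}=A+B$); step time span $1/\pi_{\mathbf{c}}(\mathcal{R})$. $\tau(\eta,t,Q)$ = least $s>t$ with $\alpha^{s-1}\in Q$ or every reaction of $Q$ inapplicable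 at some step in $[t,s]$. Runtime policy $\varrho(\mathbf{c})\subseteq\operatorname{NV}(\mathcal{R})$; skipping policy $\sigma(t)\ge t$; rounds $t(0)=0$, $t_e(i)=\sigma(t(i))$, $\mathbf{e}^i=\mathbf{c}^{t_e(i)}$, $t(i+1)=\tau(\eta,t_e(i),\varrho(\mathbf{e}^i))$; $\operatorname{TC}^{\varrho}(\mathbf{c})$ = expected total time span of the steps before $\tau(\eta_r,0,\varrho(\mathbf{c}))$ of a stochastic execution $\eta_r$ from $\mathbf{c}$; $\operatorname{RT}_{\mathrm{halt}}^{\varrho,\sigma}(\eta)=\sum_{i<i^*}\operatorname{TC}^{\varrho}(\mathbf{e}^i)$ with $i^*=\min\{i:t(i)\ge t^*\}$, $t^*$ the halting step; halting runtime $\operatorname{RT}_{\mathrm{halt}}^{\Pi}(n)=\min_\varrho\max_{\eta,\sigma}\operatorname{RT}_{\mathrm{halt}}^{\varrho,\sigma}(\eta)$ over weakly fair executions from valid initial configurations of molecular count $n$ and all skipping policies. *)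

From HB Require Import structures.
From mathcomp Require Import all_boot all_order all_algebra.
From mathcomp Require Import all_classical all_reals all_analysis.
Set Implicit Arguments.
Unset Strict Implicit.
Unset Printing Implicit Defensive.
Import Order.TTheory GRing.Theory Num.Theory.

Section CRN.
Variable S : finType.

Definition conf := {ffun S -> nat}.
Definition rxn := (conf * conf)%type.

Definition size1 (c : conf) : nat := \sum_(s : S) c s.

Definition applicable (a : rxn) (c : conf) : bool := [forall s, a.1 s <= c s].
Definition apply_rxn (a : rxn) (c : conf) : conf :=
  [ffun s => c s - a.1 s + a.2 s].
Definition is_void (a : rxn) : bool := a.1 == a.2.

Variable Rx : seq rxn.

Definition nR (r : conf) : nat := count (fun b : rxn => b.1 == r) Rx.

Definition step (c c' : conf) : Prop :=
  exists2 a, a \in Rx & applicable a c /\ c' = apply_rxn a c.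

Inductive reachable : conf -> conf -> Prop :=
| reach_refl c : reachable c c
| reach_step c c' c'' : step c c' -> reachable c' c'' -> reachable c c''.

Definition halting_in (Z : conf -> Prop) (c : conf) : Prop :=
  Z c /\ forall c', reachable c c' -> c' = c.

Definition wf_CRN : Prop :=
  [/\ uniq Rx,
      (forall a, a \in Rx -> 1 <= size1 a.1 <= 2 /\ size1 a.1 <= size1 a.2),
      (forall r : conf, 1 <= size1 r <= 2 -> exists2 a, a \in Rx & a.1 = r),
      (forall a b, a \in Rx -> b \in Rx -> is_void a -> b.1 = a.1 -> b = a) &
      exists kappa : nat, forall c c', reachable c c' ->
          size1 c' <= kappa * size1 c ]%N.

Record execution := Exec { ex_conf : nat -> conf; ex_rxn : nat -> rxn }.

Definition is_execution (eta : execution) : Prop :=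
  forall t, [/\ ex_rxn eta t \in Rx,
               applicable (ex_rxn eta t) (ex_conf eta t) &
               ex_conf eta t.+1 = apply_rxn (ex_rxn eta t) (ex_conf eta t)].

Definition weakly_fair (eta : execution) : Prop :=
  is_execution eta /\
  forall t a, a \in Rx -> applicable a (ex_conf eta t) ->
    exists2 t', (t <= t')%N &
      ex_rxn eta t' = a \/ ~~ applicable a (ex_conf eta t').

Definition halts_into (Z : conf -> Prop) (eta : execution) : Prop :=
  exists t, halting_in Z (ex_conf eta t).

Definition halting_step (Z : conf -> Prop) (eta : execution) (ts : nat) : Prop :=
  halting_in Z (ex_conf eta ts) /\
  forall t, (t < ts)%N -> ~ halting_in Z (ex_conf eta t).

Definition tau_cond (eta : execution) (t : nat) (Q : seq rxn) (s : nat) : Prop :=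
  (t < s)%N /\
  (ex_rxn eta s.-1 \in Q \/
   forall a, a \in Q -> exists2 t', (t <= t' <= s)%N &
                                   ~~ applicable a (ex_conf eta t')).

Definition is_tau (eta : execution) (t : nat) (Q : seq rxn) (s : nat) : Prop :=
  tau_cond eta t Q s /\ forall s', tau_cond eta t Q s' -> (s <= s')%N.

Definition runtime_policy (rho : conf -> seq rxn) : Prop :=
  forall c a, a \in rho c -> a \in Rx /\ ~~ is_void a.

Definition skipping_policy (sigma : nat -> nat) : Prop :=
  forall t, (t <= sigma t)%N.

Variable R : realType.
Local Open Scope ring_scope.

(* propensity: c(A)/|R(r)| if r = A; binom(c(A),2)/(vol |R(r)|) if r = 2A;
   c(A)c(B)/(vol |R(r)|) if r = A + B. *)
Definition propensity (vol : R) (c : conf) (a : rxn) : R :=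
  (\prod_(s : S) 'C(c s, a.1 s))%:R /
    (vol ^+ (size1 a.1).-1 * (nR a.1)%:R).

Definition prop_total (vol : R) (c : conf) : R :=
  \sum_(a <- Rx) propensity vol c a.

Definition rx_of (i : 'I_(size Rx)) : rxn := tnth (in_tuple Rx) i.

Definition path_confs (c : conf) (l : seq rxn) : seq conf :=
  c :: scanl (fun c' a => apply_rxn a c') c l.

Fixpoint path_prob (vol : R) (c : conf) (l : seq rxn) : R :=
  match l with
  | [::] => 1
  | a :: l' => propensity vol c a / prop_total vol c *
               path_prob vol (apply_rxn a c) l'
  end.

(* the condition defining tau(eta_r, 0, Q) at step s, evaluated on the
   prefix (c^0..c^t, alpha^0..alpha^{t-1}) with 1 <= s <= t *)
Definition tau_cond_path (c : conf) (l : seq rxn) (Q : seq rxn) (s : nat) : bool :=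
  (nth (c, c) l s.-1 \in Q) ||
  all (fun a => has (fun j => ~~ applicable a (nth c (path_confs c l) j))
                    (iota 0 s.+1)) Q.

Definition tau_gt (c : conf) (l : seq rxn) (Q : seq rxn) : bool :=
  all (fun s => ~~ tau_cond_path c l Q s) (iota 1 (size l)).

Definition step_time_contrib (vol : R) (c : conf) (Q : seq rxn) (t : nat) : R :=
  \sum_(p : t.-tuple 'I_(size Rx))
    let l := map rx_of p in
    path_prob vol c l *
      (if tau_gt c l Q then (prop_total vol (last c (path_confs c l)))^-1
       else 0).

(* TC^rho(c): expected total time span of the steps before
   tau(eta_r, 0, rho(c)) of a stochastic execution eta_r from c *)
Definition TC (vol : R) (rho : conf -> seq rxn) (c : conf) : \bar R :=
  (\sum_(t <oo) (step_time_contrib vol c (rho c) t)%:E)%E.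

End CRN.

Record CRD (Sigma : finType) := MkCRD {
  crd_S : finType;
  crd_R : seq (rxn crd_S);
  crd_in : Sigma -> crd_S;
  crd_Y0 : {set crd_S};
  crd_Y1 : {set crd_S};
  crd_F : crd_S
}.

Section CRDdefs.
Variable Sigma : finType.
Variable D : CRD Sigma.
Local Notation S := (crd_S D).

Definition wf_CRD : Prop :=
  [/\ wf_CRN (crd_R D), injective (crd_in D),
      [disjoint crd_Y0 D & crd_Y1 D] &
      forall i, crd_in D i != crd_F D].

Definition input_of (c : conf S) : Sigma -> nat := fun i => c (crd_in D i).

Definition valid_init (c : conf S) : Prop :=
  (1 <= c (crd_F D))%N /\
  forall s, s \notin codom (crd_in D) -> s != crd_F D -> c s = 0%N.

Definition count_in (c : conf S) (Y : {set S}) : nat := \sum_(s in Y) c s.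

Definition decision (v : bool) (c : conf S) : Prop :=
  let Yv := if v then crd_Y1 D else crd_Y0 D in
  let Ynv := if v then crd_Y0 D else crd_Y1 D in
  (0 < count_in c Yv)%N /\ count_in c Ynv = 0%N.

Definition haltingly_decides (psi : (Sigma -> nat) -> bool) : Prop :=
  forall (x : Sigma -> nat) (eta : execution S),
    valid_init (ex_conf eta 0) -> input_of (ex_conf eta 0) = x ->
    weakly_fair (crd_R D) eta ->
    halts_into (crd_R D) (decision (psi x)) eta.

(* RT_halt^{rho,sigma}(eta) <= bound, for every admissible choice of the
   round structure (which is uniquely determined by eta, sigma, rho) *)
Definition RT_halt_le (R : realType) (vol : R) (psi : (Sigma -> nat) -> bool)
    (rho : conf S -> seq (rxn S)) (sigma : nat -> nat) (eta : execution S)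
    (bound : R) : Prop :=
  forall (tr te : nat -> nat) (tstar istar : nat),
    tr 0 = 0%N ->
    (forall i, te i = sigma (tr i)) ->
    (forall i, is_tau eta (te i) (rho (ex_conf eta (te i))) (tr i.+1)) ->
    halting_step (crd_R D) (decision (psi (input_of (ex_conf eta 0)))) eta tstar ->
    (tstar <= tr istar)%N -> (forall i, (i < istar)%N -> (tr i < tstar)%N) ->
    (\sum_(i < istar) TC (crd_R D) vol rho (ex_conf eta (te i)) <= bound%:E)%E.

Definition halting_runtime_linear (R : realType) (vol : nat -> R)
    (psi : (Sigma -> nat) -> bool) : Prop :=
  exists (C : R) (n0 : nat), forall n : nat, (n0 <= n)%N ->
    exists rho : conf S -> seq (rxn S),
      runtime_policy (crd_R D) rho /\
      forall (eta : execution S) (sigma : nat -> nat),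
        valid_init (ex_conf eta 0) -> size1 (ex_conf eta 0) = n ->
        weakly_fair (crd_R D) eta -> skipping_policy sigma ->
        RT_halt_le (vol n) psi rho sigma eta (C * n%:R).

End CRDdefs.

Definition modulo_predicate (Sigma : finType) (psi : (Sigma -> nat) -> bool) : Prop :=
  exists (a : Sigma -> int) (b m : int), (0 < m)%R /\
    forall x : Sigma -> nat,
      psi x <-> (\sum_(i : Sigma) a i * (x i)%:Z == b %[mod m])%Z.

Definition volume_theta_n (R : realType) (vol : nat -> R) : Prop :=
  exists c1 c2 : R, (0 < c1)%R /\ (0 < c2)%R /\
    forall n : nat, (1 <= n)%N -> (c1 * n%:R <= vol n)%R /\ (vol n <= c2 * n%:R)%R.

From HB Require Import structures.
From mathcomp Require Import all_boot all_order all_algebra.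
From mathcomp Require Import all_classical all_reals all_analysis.
From mathcomp Require Import zify ring lra.
Import Order.TTheory GRing.Theory Num.Theory.
Set Implicit Arguments.
Unset Strict Implicit.
Unset Printing Implicit Defensive.

(* Take one species per residue modulo m (the fuel is residue 0), one per input
   (input i carries residue a_i mod m) and an inert waste species.  Any two live
   (non-waste) molecules merge into the molecule of their summed residue plus a
   waste molecule; every other reaction is void.  A non-void step lowers the live
   count by one and keeps the residue sum modulo m, so a fair execution halts
   exactly when one live molecule is left, and that molecule carries a.x mod m.
   With k >= 2 live molecules some species holds at least k/|S| of them, so the
   merge propensity is at least k^2/(4|S|^2 phi) and a round costs at most
   1 + 4|S|^2 phi/k^2.  The live count strictly drops from round to round, so
   the rounds cost at most n + 8|S|^2 phi = O(n) in total. *)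

Lemma sumn_gt0_witness (I : finType) (P : pred I) (F : I -> nat) :
  0 < \sum_(i | P i) F i -> exists i, P i /\ 0 < F i.
Proof.
case: (pickP (fun i => P i && (0 < F i))) => [i /andP[Pi Fi] _|none]; first by exists i.
by rewrite big1 // => i Pi; have := none i; rewrite Pi /=; lia.
Qed.

Section Configurations.
Variable S : finType.
Implicit Types (c r : conf S) (f : S -> nat).

Definition unit_conf (s : S) : conf S := [ffun t => nat_of_bool (t == s)].
Definition pair_conf (s u : S) : conf S :=
  [ffun t => nat_of_bool (t == s) + nat_of_bool (t == u)].
Definition wsum f c : nat := \sum_s c s * f s.

Lemma wsum_apply_rxn f (a : rxn S) c : applicable a c ->
  wsum f (apply_rxn a c) + wsum f a.1 = wsum f c + wsum f a.2.
Proof.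
move=> /forallP app_a; rewrite /wsum -!big_split /=; apply: eq_bigr => s _.
by rewrite ffunE -!mulnDl; congr (_ * _); have := app_a s; lia.
Qed.

Lemma size1E c : size1 c = wsum (fun _ => 1) c.
Proof. by apply: eq_bigr => s _; rewrite muln1. Qed.

Lemma wsum_unit f s : wsum f (unit_conf s) = f s.
Proof.
rewrite /wsum (bigD1 s) //= ffunE eqxx mul1n big1 ?addn0 // => t /negbTE.
by rewrite ffunE => ->.
Qed.

Lemma wsum_pair f s u : wsum f (pair_conf s u) = f s + f u.
Proof.
rewrite /wsum (eq_bigr (fun t => unit_conf s t * f t + unit_conf u t * f t)).
  by rewrite big_split /= -!/(wsum _ _) !wsum_unit.
by move=> t _; rewrite !ffunE mulnDl.
Qed.

Lemma size1_unit s : size1 (unit_conf s) = 1.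
Proof. by rewrite size1E wsum_unit. Qed.

Lemma size1_pair s u : size1 (pair_conf s u) = 2.
Proof. by rewrite size1E wsum_pair. Qed.

Lemma leq_wsum f c c' : (forall s, c s <= c' s) -> wsum f c <= wsum f c'.
Proof. by move=> le_cc'; apply: leq_sum => s _; rewrite leq_mul2r le_cc' orbT. Qed.

Lemma size1S c k : size1 c = k.+1 ->
  exists s c', c = [ffun t => c' t + nat_of_bool (t == s)] /\ size1 c' = k.
Proof.
move=> size_c.
have [s [_ cs_gt0]] : exists s, true /\ 0 < c s.
  by apply: sumn_gt0_witness; rewrite [X in 0 < X]size_c.
exists s, [ffun t => c t - nat_of_bool (t == s)]; split.
  by apply/ffunP => t; rewrite !ffunE; case: eqP => [->|]; lia.
move: size_c; rewrite /size1 (bigD1 s) //= => size_c.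
rewrite (bigD1 s) //= ffunE eqxx (eq_bigr c) => [|t /negbTE]; last first.
  by rewrite ffunE => ->; rewrite subn0.
by move: size_c cs_gt0 => /=; lia.
Qed.

Lemma size1_eq0 c : size1 c = 0 -> forall s, c s = 0.
Proof. by move=> /eqP; rewrite sum_nat_eq0 => /forallP c0 s; apply/eqP/(implyP (c0 s)). Qed.

Lemma size1_eq1 c : size1 c = 1 -> exists s, c = unit_conf s.
Proof.
move=> /size1S [s [c' [-> /size1_eq0 c'0]]]; exists s.
by apply/ffunP => t; rewrite !ffunE c'0.
Qed.

Lemma size1_eq2 c : size1 c = 2 -> exists s u, c = pair_conf s u.
Proof.
move=> /size1S [s [c' [-> /size1_eq1 [u ->]]]]; exists u, s.
by apply/ffunP => t; rewrite !ffunE.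
Qed.

Lemma apply_void_rxn c r : (forall s, r s <= c s) -> apply_rxn (r, r) c = c.
Proof. by move=> le_rc; apply/ffunP => s; rewrite ffunE /= subnK. Qed.

End Configurations.

Lemma sum_tuple_prod (R : comNzRingType) (I : finType) (F : I -> R) (t : nat) :
  (\sum_(p : t.-tuple I) \prod_(i <- p) F i = (\sum_i F i) ^+ t)%R.
Proof.
rewrite -[in RHS](card_ord t) -prodr_const bigA_distr_bigA /=.
rewrite (reindex (@tuple_of_finfun I t)) /=; last first.
  by exists (@finfun_of_tuple I t) => x _; rewrite ?finfun_of_tupleK ?tuple_of_finfunK.
by apply: eq_bigr => f _; rewrite big_map big_enum.
Qed.

Lemma nneseries_le_geometric (R : realType) (f : nat -> R) (q K : R) :
  (forall t, 0 <= f t)%R -> (forall t, f t <= q ^+ t * K)%R ->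
  (0 <= q < 1)%R -> (0 <= K)%R ->
  (\sum_(t <oo) (f t)%:E <= (K / (1 - q))%:E)%E.
Proof.
move=> f_ge0 f_le /andP[q_ge0 q_lt1] K_ge0.
have fE_ge0 n : (0 <= n)%N -> true -> (0%R <= (f n)%:E)%E by rewrite lee_fin.
apply: (lime_le (is_cvg_nneseries fE_ge0)); apply: nearW => k.
rewrite sumEFin lee_fin.
apply: (@le_trans _ _ (\sum_(0 <= i < k) q ^+ i * K)%R); first exact: ler_sum.
rewrite -big_distrl /= big_mkord [X in (_ <= X)%R]mulrC.
have geom_le : ((1 - q) * \sum_(i < k) q ^+ i <= 1)%R.
  by rewrite -opprB mulNr -subrX1 opprB lerBlDr lerDl exprn_ge0.
have q1_gt0 : (0 < 1 - q)%R by rewrite subr_gt0.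
by rewrite ler_wpM2r // -[X in (_ <= X)%R]mul1r ler_pdivlMr // mulrC.
Qed.

Lemma ler_sum_seq_term (R : numDomainType) (T : eqType) (s : seq T) (P : pred T)
    (F : T -> R) x :
  x \in s -> P x -> (forall y, 0 <= F y)%R -> (F x <= \sum_(y <- s | P y) F y)%R.
Proof. by move=> xs Px F_ge0; rewrite (big_rem x) //= Px lerDl sumr_ge0. Qed.

Lemma sqrn_le_4bin2 n : 2 <= n -> n ^ 2 <= 4 * 'C(n, 2).
Proof.
have bin2_mul2 m : 'C(m, 2) * 2 = m * m.-1.
  by elim: m => // m IH; rewrite binS bin1; case: m IH => //= m; nia.
by have := bin2_mul2 n; case: n => // n; nia.
Qed.

Lemma decreasing_head_ge (f : nat -> nat) k :
  (forall i, i < k -> f i.+1 < f i) -> 1 <= f k -> k.+1 <= f 0.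
Proof.
elim: k f => [|k IH] f f_decr fk_ge1 //.
have := IH (fun i => f i.+1) (fun i ik => f_decr i.+1 ik) fk_ge1.
by have := f_decr 0 isT; lia.
Qed.

Lemma sum_decreasing_le (R : realDomainType) (g : nat -> R) k (f : nat -> nat) :
  (forall v w, 1 <= v -> v <= w -> (g w <= g v)%R) ->
  (forall i, i.+1 < k -> f i.+1 < f i) -> (forall i, i < k -> 1 <= f i) ->
  (\sum_(0 <= i < k) g (f i) <= \sum_(0 <= i < k) g i.+1)%R.
Proof.
elim: k f => [|k IH] f g_decr f_decr f_ge1; first by rewrite !big_geq.
rewrite big_nat_recl // big_nat_recr //= addrC; apply: lerD.
  by apply: g_decr => //; apply: decreasing_head_ge => [i ik|]; [exact: f_decr | exact: f_ge1].
by apply: (IH (fun i => f i.+1)) => // i ik; [exact: f_decr | exact: f_ge1].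
Qed.

Lemma sum_inv_sqr_le (R : realFieldType) k :
  (\sum_(0 <= i < k) (((i.+1) ^ 2)%:R)^-1 <= 2 - 2 / (k.+1)%:R :> R)%R.
Proof.
elim: k => [|k IH]; first by rewrite big_geq // divr1 subrr.
rewrite big_nat_recr //=; apply: le_trans (lerD IH (lexx _)) _.
set x : R := (k.+1)%:R%R.
have x_ge1 : (1 <= x)%R by rewrite ler1n.
have -> : ((k.+1 ^ 2)%:R = x ^+ 2 :> R)%R by rewrite natrX.
have -> : ((k.+2)%:R = x + 1 :> R)%R by rewrite -natr1.
rewrite -subr_ge0.
have -> : ((2 - 2 / (x + 1)) - (2 - 2 / x + (x ^+ 2)^-1) = (x - 1) / (x ^+ 2 * (x + 1)))%R.
  by field; apply/andP; split; rewrite gt_eqF //; lra.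
by apply: divr_ge0; [lra | apply: mulr_ge0; [apply: exprn_ge0 | ]; lra].
Qed.

Section ModuloCRD.
Variables (Sigma : finType) (Mp : nat) (vin : Sigma -> nat) (good : nat -> bool).
Local Notation M := Mp.+1.

(* [None] is the inert waste species, [Some (inr u)] the residue [u] (the fuel
   is residue 0) and the input species [Some (inl i)] carries residue [vin i]. *)
Definition mod_species : finType := (option (Sigma + 'I_M))%type.
Local Notation S := mod_species.
Implicit Types (c r : conf S) (s : S).

Definition residue s : nat :=
  match s with Some (inl i) => vin i | Some (inr u) => u | None => 0 end.
Definition live s : nat := if s is Some _ then 1 else 0.
Definition residue_species (w : nat) : S := Some (inr (inord w)).

Definition mergeable r : bool :=
  (size1 r == 2) && [forall s, (0 < r s) ==> (s != None)].
Definition merge_products r : conf S :=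
  if mergeable r then pair_conf (residue_species (wsum residue r %% M)) None else r.
Definition mod_rxn r : rxn S := (r, merge_products r).

Definition reactants : seq (conf S) :=
  [seq unit_conf s | s <- enum S] ++ [seq pair_conf s u | s <- enum S, u <- enum S].
Definition mod_rxns : seq (rxn S) := undup (map mod_rxn reactants).

Definition voters1 : {set S} := [set s | (s != None) && good (residue s)].
Definition voters0 : {set S} := [set s | (s != None) && ~~ good (residue s)].
Definition mod_CRD : CRD Sigma :=
  @MkCRD Sigma S mod_rxns (fun i => Some (inl i)) voters0 voters1 (Some (inr ord0)).

Definition nlive c : nat := wsum live c.
Definition residue_sum c : nat := wsum residue c.

Lemma nlive_le_size1 c : nlive c <= size1 c.
Proof.
by rewrite size1E; apply: leq_sum => s _; rewrite leq_mul2l; case: s => [s|]; rewrite ?orbT.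
Qed.

Lemma mod_rxnsP a : a \in mod_rxns -> exists2 r, r \in reactants & a = mod_rxn r.
Proof. by rewrite mem_undup => /mapP. Qed.

Lemma mod_rxn_in r : r \in reactants -> mod_rxn r \in mod_rxns.
Proof. by move=> r_in; rewrite mem_undup map_f. Qed.

Lemma mod_rxnE a : a \in mod_rxns -> a = mod_rxn a.1.
Proof. by move=> /mod_rxnsP [r _ ->]. Qed.

Lemma mem_reactants r : (r \in reactants) = (1 <= size1 r <= 2).
Proof.
apply/idP/idP => [|size_r].
  by rewrite mem_cat => /orP[/mapP[s _ ->]|/allpairsP[[s u] [_ _ ->]]];
    rewrite ?size1_unit ?size1_pair.
have [/size1_eq1 [s ->]|/size1_eq2 [s [u ->]]] : size1 r = 1 \/ size1 r = 2 by lia.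
  by rewrite mem_cat map_f ?mem_enum.
by rewrite mem_cat (allpairs_f (@pair_conf S)) ?mem_enum ?orbT.
Qed.

Lemma nR_mod_rxns a : a \in mod_rxns -> nR mod_rxns a.1 = 1.
Proof.
move=> a_in; rewrite /nR (@eq_in_count _ _ (pred1 a)).
  by rewrite count_uniq_mem ?undup_uniq // a_in.
move=> b b_in /=; apply/eqP/eqP => [ab|->] //.
by rewrite (mod_rxnE a_in) (mod_rxnE b_in) ab.
Qed.

Lemma nlive_mergeable r : mergeable r -> nlive r = 2.
Proof.
case/andP => /eqP <- /forallP live_r; rewrite size1E; apply: eq_bigr => s _.
by have := live_r s; case: (r s) => [|k] /=; [rewrite !mul0n | case: s].
Qed.

Lemma mergeable_waste r : mergeable r -> r None = 0.
Proof. by case/andP => _ /forallP /(_ None); case: (r None). Qed.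

Lemma size1_merge_products r : size1 (merge_products r) = size1 r.
Proof. by rewrite /merge_products; case: ifP => // /andP[/eqP -> _]; rewrite size1_pair. Qed.

Lemma is_void_mod_rxn r : is_void (mod_rxn r) = ~~ mergeable r.
Proof.
rewrite /is_void /mod_rxn /merge_products /=; case: ifP => merge_r; last by rewrite eqxx.
by apply/negbTE/eqP => rE; have := mergeable_waste merge_r; rewrite rE !ffunE /=.
Qed.

Lemma size1_step a c : a \in mod_rxns -> applicable a c ->
  size1 (apply_rxn a c) = size1 c.
Proof.
move=> a_in app_a; have := wsum_apply_rxn (fun _ => 1) app_a.
by rewrite -!size1E (mod_rxnE a_in) /= size1_merge_products; lia.
Qed.

Lemma wf_mod_rxns : wf_CRN mod_rxns.
Proof.
split.
- exact: undup_uniq.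
- move=> a /mod_rxnsP [r]; rewrite mem_reactants => size_r -> /=.
  by rewrite size1_merge_products; lia.
- by move=> r size_r; exists (mod_rxn r); rewrite ?mod_rxn_in ?mem_reactants.
- by move=> a b a_in b_in _ ab; rewrite (mod_rxnE a_in) (mod_rxnE b_in) ab.
- exists 1 => c c'; elim => [d|d d' d'' [a a_in [app_a ->]] _ IH]; first by rewrite mul1n.
  by rewrite (leq_trans IH) // size1_step.
Qed.

Lemma wf_mod_CRD : wf_CRD mod_CRD.
Proof.
split => //=; first exact: wf_mod_rxns.
- by move=> i j [].
- rewrite -setI_eq0; apply/eqP/setP => s; rewrite !inE.
  by case: (s != None); case: (good _).
Qed.

Lemma mod_rxn_stepP a c : a \in mod_rxns -> applicable a c ->
  (is_void a /\ apply_rxn a c = c) \/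
  [/\ ~~ is_void a, nlive (apply_rxn a c) + 1 = nlive c, 2 <= nlive c &
      residue_sum (apply_rxn a c) %% M = residue_sum c %% M].
Proof.
move=> a_in app_a.
have le_a_c : nlive a.1 <= nlive c by apply: leq_wsum => s; move/forallP: app_a.
case: a a_in app_a (mod_rxnE a_in) le_a_c => r p a_in app_a /= [pE] le_a_c; subst p.
case merge_r : (mergeable r).
- right; split; first by rewrite is_void_mod_rxn merge_r.
  + have := wsum_apply_rxn live app_a; have live_r : wsum live r = 2 by exact: nlive_mergeable.
    by rewrite /nlive /= /merge_products merge_r wsum_pair live_r /=; lia.
  + by rewrite -(nlive_mergeable merge_r).
  + have := wsum_apply_rxn residue app_a.
    rewrite /residue_sum /= /merge_products merge_r wsum_pair /= addn0 inordK ?ltn_pmod //.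
    by move=> sumE; apply/eqP; rewrite -(eqn_modDr (wsum residue r)) sumE modnDmr.
- left; split; first by rewrite is_void_mod_rxn merge_r.
  move: app_a; rewrite /mod_rxn /merge_products merge_r => /forallP app_r.
  exact: apply_void_rxn.
Qed.

Section Execution.
Variable eta : execution S.
Hypothesis eta_exec : is_execution mod_rxns eta.
Local Notation cf := (ex_conf eta).

Lemma exec_stepP t : cf t.+1 = cf t \/
  [/\ nlive (cf t.+1) + 1 = nlive (cf t), 2 <= nlive (cf t) &
      residue_sum (cf t.+1) %% M = residue_sum (cf t) %% M].
Proof.
have [a_in app_a ->] := eta_exec t.
by case: (mod_rxn_stepP a_in app_a) => [[_ ->]|[_ ? ? ?]]; [left | right].
Qed.

Lemma size1_exec t : size1 (cf t) = size1 (cf 0).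
Proof. by elim: t => // t IH; have [a_in app_a ->] := eta_exec t; rewrite size1_step. Qed.

Lemma residue_sum_exec t : residue_sum (cf t) %% M = residue_sum (cf 0) %% M.
Proof. by elim: t => // t IH; case: (exec_stepP t) => [->|[_ _ ->]]. Qed.

Lemma nlive_exec_gt0 t : 0 < nlive (cf 0) -> 0 < nlive (cf t).
Proof. by move=> nlive0; elim: t => // t IH; case: (exec_stepP t) => [->|[]] //; lia. Qed.

Lemma nlive_exec_mono t d : nlive (cf (t + d)) <= nlive (cf t) /\
  (nlive (cf (t + d)) = nlive (cf t) -> cf (t + d) = cf t).
Proof.
elim: d => [|d [IH1 IH2]]; first by rewrite addn0.
by rewrite addnS; case: (exec_stepP (t + d)) => [->|[]] //; lia.
Qed.

Lemma nlive_exec_le t t' : t <= t' -> nlive (cf t') <= nlive (cf t).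
Proof. by move=> /subnKC <-; case: (nlive_exec_mono t (t' - t)). Qed.

Lemma nlive_exec_eq t t' : t <= t' -> nlive (cf t') = nlive (cf t) -> cf t' = cf t.
Proof. by move=> /subnKC <-; case: (nlive_exec_mono t (t' - t)). Qed.

End Execution.

Lemma nlive_gt0_live c : 0 < nlive c -> exists2 A, A != None & 0 < c A.
Proof.
move=> /sumn_gt0_witness [[A|] [_]]; rewrite muln_gt0 => /andP[cA //].
by exists (Some A).
Qed.

Lemma nlive1_stable c c' : nlive c = 1 -> reachable mod_rxns c c' -> c' = c.
Proof.
move=> nlive_c c_c'; elim: c_c' nlive_c => // d d' d'' [a a_in [app_a ->]] _ IH nlive_d.
by case: (mod_rxn_stepP a_in app_a) => [[_ dE]|[_ _ ? _]]; [rewrite dE in IH *; exact: IH | lia].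
Qed.

Lemma nlive1_single c : nlive c = 1 ->
  exists A, [/\ A != None, c A = 1 & forall s, s != A -> s != None -> c s = 0].
Proof.
move=> nlive_c; have [A AN cA_gt0] := nlive_gt0_live (eq_leq (esym nlive_c)).
have liveA : live A = 1 by case: A AN {cA_gt0}.
move: nlive_c; rewrite /nlive /wsum (bigD1 A) //= liveA muln1 => nlive_c.
have cA : c A = 1 by apply/eqP; rewrite eqn_leq cA_gt0 andbT -[X in _ <= X]nlive_c leq_addr.
move: nlive_c; rewrite cA => /eqP; rewrite -{2}(addn0 1) eqn_add2l.
rewrite sum_nat_eq0 => /forallP rest0; exists A; split => // s sA sN.
by move: (rest0 s); rewrite sA /=; case: s sA sN => // s _ _; rewrite muln1 => /eqP.
Qed.

Lemma nlive1_decision c : nlive c = 1 -> exists A,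
  [/\ A != None, residue_sum c = residue A & @decision _ mod_CRD (good (residue A)) c].
Proof.
move=> /nlive1_single [A [AN cA c_other]]; exists A; split => //.
  rewrite /residue_sum /wsum (bigD1 A) //= cA mul1n big1 ?addn0 // => s sA.
  by case: (eqVneq s None) => [->|sN]; [rewrite muln0 | rewrite c_other].
have count_inE (Y : {set S}) : {subset Y <= predC1 None} -> @count_in _ mod_CRD c Y = (A \in Y).
  move=> YN; rewrite /count_in; case AY: (A \in Y).
    by rewrite (bigD1 A) //= cA big1 // => s /andP[sY sA]; apply: c_other => //; exact: YN.
  rewrite big1 // => s sY; apply: c_other; last exact: YN.
  by apply: contraFneq AY => <-.
have voters1_live : {subset voters1 <= predC1 None} by move=> s; rewrite !inE => /andP[].
have voters0_live : {subset voters0 <= predC1 None} by move=> s; rewrite !inE => /andP[].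
by rewrite /decision /=; case good_A : (good _); rewrite !count_inE // !inE AN good_A.
Qed.

Lemma mergeable_pair A B : A != None -> B != None -> mergeable (pair_conf A B).
Proof.
move=> AN BN; rewrite /mergeable size1_pair eqxx /=; apply/forallP => s; apply/implyP.
by rewrite ffunE; case: eqP => [->|_] //; case: eqP => [->|_].
Qed.

Lemma mod_rxn_pair_in A B : mod_rxn (pair_conf A B) \in mod_rxns.
Proof. by rewrite mod_rxn_in // mem_reactants size1_pair. Qed.

Lemma merge_applicable c : 2 <= nlive c ->
  exists2 a, a \in mod_rxns & applicable a c /\ ~~ is_void a.
Proof.
move=> nlive_c; have [A AN cA_gt0] := nlive_gt0_live (ltnW nlive_c).
have liveA : live A = 1 by case: A AN {cA_gt0}.
have [B [BN cB]] : exists B, B != None /\ (if B == A then 2 <= c A else 0 < c B).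
  case: (leqP 2 (c A)) => cA; first by exists A; rewrite eqxx.
  move: nlive_c; rewrite /nlive /wsum (bigD1 A) //= liveA muln1 => nlive_c.
  have [B [BA cB_gt0]] : exists B, B != A /\ 0 < c B * live B.
    apply: sumn_gt0_witness; rewrite lt0n; apply/eqP => rest0.
    by move: nlive_c; rewrite rest0 addn0 leqNgt cA.
  exists B; rewrite (negbTE BA); move: cB_gt0; rewrite muln_gt0 => /andP[-> ].
  by case: B {BA}.
exists (mod_rxn (pair_conf A B)); first exact: mod_rxn_pair_in.
split; last by rewrite is_void_mod_rxn mergeable_pair.
apply/forallP => s /=; rewrite ffunE.
case: eqP => [->|sA]; case: eqP => [BA|sB] //=; move: cB; rewrite -BA.
  by rewrite eqxx.
by case: eqP => // /sA.
Qed.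

Lemma fair_exec_nlive1 eta : weakly_fair mod_rxns eta -> 0 < nlive (ex_conf eta 0) ->
  exists t, nlive (ex_conf eta t) = 1.
Proof.
move=> [eta_exec fair] nlive0.
suff nlive_le k t : nlive (ex_conf eta t) <= k -> exists t', nlive (ex_conf eta t') = 1.
  exact: (nlive_le _ 0 (leqnn _)).
have pos t' := nlive_exec_gt0 eta_exec t' nlive0.
elim: k t => [|k IH] t le_k; first by have := pos t; lia.
case: (leqP (nlive (ex_conf eta t)) 1) => [|nlive_t]; first by exists t; have := pos t; lia.
have [a a_in [app_a nvoid_a]] := merge_applicable nlive_t.
have [t' le_tt' [fired|disabled]] := fair t a a_in app_a.
- have [_ app_a' next] := eta_exec t'; rewrite fired in app_a' next.
  case: (mod_rxn_stepP a_in app_a') => [[void_a _]|[_ drop _ _]].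
    by rewrite void_a in nvoid_a.
  by apply: (IH t'.+1); rewrite next; have := nlive_exec_le eta_exec le_tt'; lia.
- apply: (IH t'); have := nlive_exec_le eta_exec le_tt'.
  case: (ltngtP (nlive (ex_conf eta t')) (nlive (ex_conf eta t))) => // same _; first lia.
  by have := nlive_exec_eq eta_exec le_tt' same => confE; rewrite confE app_a in disabled.
Qed.

Lemma residue_sum_init c0 : @valid_init _ mod_CRD c0 ->
  residue_sum c0 = \sum_i c0 (Some (inl i)) * vin i.
Proof.
move=> [_ c0_other].
have inj_in : {in [pred i : Sigma | true] &, injective (fun i => Some (inl i) : S)}.
  by move=> i j _ _ [].
rewrite -(big_imset (fun s => c0 s * residue s) inj_in) /= /residue_sum /wsum.
rewrite [RHS]big_mkcond; apply: eq_bigr => s _; case: ifP => // s_notin.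
case: s s_notin => [[i|u]|] s_notin /=; last by rewrite muln0.
- by rewrite imset_f in s_notin.
- case: (eqVneq u ord0) => [->|u0]; first by rewrite muln0.
  by rewrite c0_other ?mul0n //; apply/codomP => [[i]].
Qed.

Lemma nlive_init_gt0 c0 : @valid_init _ mod_CRD c0 -> 0 < nlive c0.
Proof.
case=> fuel _; rewrite /nlive /wsum (bigD1 (Some (inr ord0))) //= muln1.
exact: leq_trans fuel (leq_addr _ _).
Qed.

Lemma nlive_pigeonhole c : 0 < nlive c -> exists A, A != None /\ nlive c <= #|S| * c A.
Proof.
move=> nlive_c.
case: (pickP (fun A => (A != None) && (nlive c <= #|S| * c A))) => [A /andP[AN cA]|none].
  by exists A.
have card_gt0 : 0 < #|S| by apply/card_gt0P; exists None.
suff : #|S| * nlive c <= #|S| * (nlive c).-1 by rewrite leq_pmul2l //; lia.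
rewrite {1}/nlive /wsum big_distrr /= -sum_nat_const; apply: leq_sum => s _.
move: (none s); case: s => [s|] /= small_s; last by rewrite !muln0.
by move: small_s; rewrite muln1 => /negbT; rewrite -ltnNge; lia.
Qed.

Definition nonvoid_rxns : seq (rxn S) := [seq a <- mod_rxns | ~~ is_void a].

Lemma nlive_round_drop eta t (u : nat) : is_execution mod_rxns eta ->
  2 <= nlive (ex_conf eta t) -> tau_cond eta t nonvoid_rxns u ->
  nlive (ex_conf eta u) < nlive (ex_conf eta t).
Proof.
move=> eta_exec nlive_t [lt_tu [fired|disabled]].
- move: fired; rewrite mem_filter => /andP[nvoid_a a_in].
  have [_ app_a next] := eta_exec u.-1.
  have le_t : t <= u.-1 by lia.
  rewrite -(ltn_predK lt_tu) next.
  case: (mod_rxn_stepP a_in app_a) => [[void_a _]|[_ drop _ _]].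
    by rewrite void_a in nvoid_a.
  by have := nlive_exec_le eta_exec le_t; lia.
- have [a a_in [app_a nvoid_a]] := merge_applicable nlive_t.
  have a_nonvoid : a \in nonvoid_rxns by rewrite mem_filter nvoid_a.
  have [t' /andP[le_tt' le_t'u] disabled_a] := disabled a a_nonvoid.
  apply: leq_ltn_trans (nlive_exec_le eta_exec le_t'u) _.
  case: (ltngtP (nlive (ex_conf eta t')) (nlive (ex_conf eta t))) => // [|same].
    by rewrite ltnNge nlive_exec_le.
  by rewrite (nlive_exec_eq eta_exec le_tt' same) app_a in disabled_a.
Qed.

Section Predicate.
Variable psi : (Sigma -> nat) -> bool.
Hypothesis vin_lt : forall i, vin i < M.
Hypothesis psiE : forall x, psi x = good ((\sum_i x i * vin i) %% M).

Lemma halting_at_nlive1 eta t :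
  @valid_init _ mod_CRD (ex_conf eta 0) -> is_execution mod_rxns eta ->
  nlive (ex_conf eta t) = 1 ->
  halting_in mod_rxns (@decision _ mod_CRD (psi (@input_of _ mod_CRD (ex_conf eta 0))))
    (ex_conf eta t).
Proof.
move=> valid0 eta_exec nlive_t.
have [A [AN sumE decA]] := nlive1_decision nlive_t.
split; last by move=> c' /(nlive1_stable nlive_t).
suff -> : psi (@input_of _ mod_CRD (ex_conf eta 0)) = good (residue A) by [].
have residue_lt : residue A < M by case: A AN {sumE decA} => [[i|u]|] //= _; apply: vin_lt.
by rewrite psiE -(modn_small residue_lt) -sumE residue_sum_exec // residue_sum_init.
Qed.

Lemma mod_CRD_decides : haltingly_decides mod_CRD psi.
Proof.
move=> x eta valid0 inputE [eta_exec fair].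
have [t nlive_t] := fair_exec_nlive1 (conj eta_exec fair) (nlive_init_gt0 valid0).
by exists t; rewrite -inputE; apply: halting_at_nlive1.
Qed.

Section Runtime.
Variables (R : realType) (vol : R).
Hypothesis vol_gt0 : (0 < vol)%R.
Local Open Scope ring_scope.
Implicit Types (l : seq (rxn S)) (a : rxn S).

Local Notation prop := (propensity mod_rxns vol).
Local Notation ptotal := (prop_total mod_rxns vol).
Local Notation TC_round := (TC mod_rxns vol (fun _ => nonvoid_rxns)).

Definition prop_void c : R := \sum_(a <- mod_rxns | is_void a) prop c a.
Definition prop_nonvoid c : R := \sum_(a <- mod_rxns | ~~ is_void a) prop c a.
Definition void_weight c a : R := if is_void a then prop c a / ptotal c else 0.

Lemma prop_ge0 c a : 0 <= prop c a.
Proof. by rewrite /propensity divr_ge0 // mulr_ge0 // exprn_ge0 // ltW. Qed.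

Lemma prop_total_ge0 c : 0 <= ptotal c.
Proof. by apply: sumr_ge0 => a _; exact: prop_ge0. Qed.

Lemma prop_total_split c : ptotal c = prop_void c + prop_nonvoid c.
Proof. exact: (bigID (@is_void S)). Qed.

Lemma void_weight_ge0 c a : 0 <= void_weight c a.
Proof. by rewrite /void_weight; case: ifP => // _; rewrite divr_ge0 ?prop_ge0 ?prop_total_ge0. Qed.

Lemma prop_inapplicable c a : ~~ applicable a c -> prop c a = 0.
Proof.
move=> /forallPn [s]; rewrite -ltnNge => lt_cs.
by rewrite /propensity (bigD1 s) //= bin_small // mul0n mul0r.
Qed.

Lemma prop_applicable_ge c a : a \in mod_rxns -> applicable a c ->
  (vol ^+ (size1 a.1).-1)^-1 <= prop c a.
Proof.
move=> a_in /forallP app_a; rewrite /propensity nR_mod_rxns // mulr1 -[X in X <= _]mul1r.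
apply: ler_wpM2r; first by rewrite invr_ge0 exprn_ge0 // ltW.
by rewrite ler1n; apply: prodn_gt0 => s; rewrite bin_gt0.
Qed.

Lemma prop_nonvoid_ge c a : a \in mod_rxns -> ~~ is_void a -> prop c a <= prop_nonvoid c.
Proof. by move=> a_in nvoid_a; apply: ler_sum_seq_term => // b; exact: prop_ge0. Qed.

Lemma prop_nonvoid_gt0 c : (2 <= nlive c)%N -> 0 < prop_nonvoid c.
Proof.
move=> /merge_applicable [a a_in [app_a nvoid_a]].
apply: lt_le_trans (prop_nonvoid_ge c a_in nvoid_a).
by apply: lt_le_trans (prop_applicable_ge a_in app_a); rewrite invr_gt0 exprn_gt0.
Qed.

Lemma prop_total_ge1 c : (0 < nlive c)%N -> 1 <= ptotal c.
Proof.
move=> /nlive_gt0_live [A _ cA].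
have a_in : mod_rxn (unit_conf A) \in mod_rxns.
  by rewrite mod_rxn_in // mem_reactants size1_unit.
have app_a : applicable (mod_rxn (unit_conf A)) c.
  by apply/forallP => s; rewrite /= ffunE; case: eqP => [->|].
apply: le_trans (ler_sum_seq_term (P := xpredT) a_in isT (prop_ge0 c)).
by have := prop_applicable_ge a_in app_a; rewrite /= size1_unit expr0 invr1.
Qed.

Lemma path_prob_ge0 c l : 0 <= path_prob mod_rxns vol c l.
Proof.
elim: l c => [|a l IH] c /=; first exact: ler01.
by rewrite mulr_ge0 // divr_ge0 ?prop_ge0 ?prop_total_ge0.
Qed.

Lemma path_prob_void c l : all (@is_void S) l ->
  path_prob mod_rxns vol c l * (ptotal (last c (path_confs c l)))^-1 =
  \prod_(a <- l) (prop c a / ptotal c) * (ptotal c)^-1.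
Proof.
elim: l => [|a l IH] /=; first by rewrite big_nil mul1r.
case/andP => void_a void_l; rewrite big_cons.
case app_a : (applicable a c); last by rewrite prop_inapplicable ?app_a // !mul0r.
have -> : apply_rxn a c = c.
  case: a void_a app_a {IH} => r p /eqP /= <- /forallP app_r.
  exact: apply_void_rxn.
by rewrite -mulrA -[X in _ * X = _]/(path_prob _ _ c l * _) IH // mulrA.
Qed.

(* Before [tau] every step of a path is void, so the configuration stays [c]. *)
Lemma path_term_le c l : all (mem mod_rxns) l ->
  path_prob mod_rxns vol c l *
    (if tau_gt c l nonvoid_rxns then (ptotal (last c (path_confs c l)))^-1 else 0)
  <= \prod_(a <- l) void_weight c a * (ptotal c)^-1.
Proof.
move=> l_in; case tau_l : (tau_gt c l nonvoid_rxns); last first.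
  rewrite mulr0 mulr_ge0 ?invr_ge0 ?prop_total_ge0 // prodr_ge0 // => a _.
  exact: void_weight_ge0.
have void_l : all (@is_void S) l.
  apply/(all_nthP (c, c)) => j lt_jl.
  move/allP: tau_l => /(_ j.+1); rewrite mem_iota /= add1n ltnS lt_jl => /(_ isT).
  have nth_in : nth (c, c) l j \in mod_rxns by apply: (allP l_in); exact: mem_nth.
  by rewrite /tau_cond_path negb_or mem_filter nth_in andbT negbK => /andP[].
rewrite path_prob_void // le_eqVlt; apply/orP; left; apply/eqP; congr (_ * _).
by apply: eq_big_seq => a a_l; rewrite /void_weight (allP void_l a a_l).
Qed.

Lemma step_time_contrib_ge0 c Q t : 0 <= step_time_contrib mod_rxns vol c Q t.
Proof.
apply: sumr_ge0 => p _ /=; rewrite mulr_ge0 ?path_prob_ge0 //.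
by case: ifP => // _; rewrite invr_ge0 prop_total_ge0.
Qed.

Lemma step_time_contrib_le c t : step_time_contrib mod_rxns vol c nonvoid_rxns t <=
  (prop_void c / ptotal c) ^+ t * (ptotal c)^-1.
Proof.
apply: le_trans (ler_sum _ (fun p _ => path_term_le c _)) _.
  by move=> p _; apply/allP => a /mapP [i _ ->]; apply: mem_tnth.
under eq_bigr do rewrite big_map.
rewrite -big_distrl /= sum_tuple_prod le_eqVlt; apply/orP; left; apply/eqP.
congr (_ ^+ _ * _).
rewrite /rx_of -(big_tnth _ _ _ xpredT (void_weight c)) /prop_void big_distrl /=.
rewrite [in RHS]big_mkcond; apply: eq_bigr => a _ /=.
by rewrite /void_weight; case: ifP => // _; rewrite mul0r.
Qed.

Lemma step_time_contrib_halted c t : {in nonvoid_rxns, forall a, ~~ applicable a c} ->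
  step_time_contrib mod_rxns vol c nonvoid_rxns t.+1 = 0.
Proof.
move=> disabled; apply: big1 => p _ /=.
have : (0 < size (map (@rx_of S mod_rxns) p))%N by rewrite size_map size_tuple.
case: (map _ p) => // a l _.
suff -> : tau_gt c (a :: l) nonvoid_rxns = false by rewrite mulr0.
apply/negbTE; rewrite /tau_gt /= negb_and negbK /tau_cond_path; apply/orP; left.
by apply/orP; right; apply/allP => b b_in; apply/hasP; exists 0%N => //=; exact: disabled.
Qed.

Lemma TC_halted c : (0 < nlive c)%N -> {in nonvoid_rxns, forall a, ~~ applicable a c} ->
  (TC_round c <= ((ptotal c)^-1)%:E)%E.
Proof.
move=> nlive_c disabled; have ptotal_gt0 := lt_le_trans ltr01 (prop_total_ge1 nlive_c).
have := nneseries_le_geometric (f := step_time_contrib mod_rxns vol c nonvoid_rxns)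
  (q := 0) (K := (ptotal c)^-1).
rewrite subr0 divr1; apply.
- exact: step_time_contrib_ge0.
- case=> [|t]; first by have := step_time_contrib_le c 0; rewrite !expr0.
  by rewrite step_time_contrib_halted // expr0n mul0r.
- by rewrite lexx ltr01.
- by rewrite invr_ge0 ltW.
Qed.

Lemma TC_not_halted c : (2 <= nlive c)%N -> (TC_round c <= ((prop_nonvoid c)^-1)%:E)%E.
Proof.
move=> nlive_c; have nvoid_gt0 := prop_nonvoid_gt0 nlive_c.
have void_ge0 : 0 <= prop_void c by apply: sumr_ge0 => a _; apply: prop_ge0.
have ptotal_gt0 : 0 < ptotal c by rewrite prop_total_split; lra.
have -> : (prop_nonvoid c)^-1 = (ptotal c)^-1 / (1 - prop_void c / ptotal c).
  by rewrite prop_total_split; field; apply/andP; split; rewrite gt_eqF //; lra.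
apply: nneseries_le_geometric.
- exact: step_time_contrib_ge0.
- exact: step_time_contrib_le.
- apply/andP; split; first by rewrite divr_ge0 // ltW.
  by rewrite ltr_pdivrMr // mul1r prop_total_split; lra.
- by rewrite invr_ge0 ltW.
Qed.

Lemma nlive_sqr_le c : (2 <= nlive c)%N ->
  ((nlive c) ^ 2)%:R <= (4 * #|S| ^ 2)%:R * vol * prop_nonvoid c.
Proof.
move=> nlive_c; have [A [AN nlive_le]] := nlive_pigeonhole (ltnW nlive_c).
have K_ge0 : 0 <= (4 * #|S| ^ 2)%:R * vol by rewrite mulr_ge0 // ltW.
case: (leqP 2 (c A)) => cA.
- pose a := mod_rxn (pair_conf A A).
  have nvoid_a : ~~ is_void a by rewrite is_void_mod_rxn mergeable_pair.
  have propE : prop c a = 'C(c A, 2)%:R / vol.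
    rewrite /propensity nR_mod_rxns ?mod_rxn_pair_in // mulr1 /= size1_pair expr1.
    congr (_%:R / _); rewrite (bigD1 A) //= ffunE eqxx /= big1 ?muln1 // => s sA.
    by rewrite ffunE (negbTE sA) bin0.
  apply: le_trans (ler_wpM2l K_ge0 (prop_nonvoid_ge c (mod_rxn_pair_in A A) nvoid_a)).
  rewrite propE -mulrA [vol * _]mulrC divfK ?gt_eqF // -natrM ler_nat.
  apply: (@leq_trans ((#|S| * c A) ^ 2)); first by rewrite leq_exp2r.
  by rewrite expnMn (mulnC 4) -mulnA leq_mul2l sqrn_le_4bin2 ?orbT.
- have nlive_le_card : (nlive c <= #|S|)%N by move: nlive_le cA; nia.
  have [a a_in [app_a nvoid_a]] := merge_applicable nlive_c.
  have size_a : size1 a.1 = 2.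
    by move: nvoid_a; rewrite (mod_rxnE a_in) is_void_mod_rxn negbK => /andP[/eqP].
  have := prop_applicable_ge a_in app_a; rewrite size_a expr1 => prop_a.
  apply: le_trans (ler_wpM2l K_ge0 (le_trans prop_a (prop_nonvoid_ge c a_in nvoid_a))).
  rewrite mulfK ?gt_eqF // ler_nat.
  apply: (@leq_trans (#|S| ^ 2)); first by rewrite leq_exp2r.
  by rewrite leq_pmull.
Qed.

Definition round_cost (k : nat) : R := 1 + (4 * #|S| ^ 2)%:R * vol / (k ^ 2)%:R.

Lemma TC_round_le c : (0 < nlive c)%N -> (TC_round c <= (round_cost (nlive c))%:E)%E.
Proof.
move=> nlive_c; have cost_ge0 : 0 <= (4 * #|S| ^ 2)%:R * vol / ((nlive c) ^ 2)%:R.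
  by rewrite divr_ge0 // mulr_ge0 // ltW.
case: (leqP 2 (nlive c)) => nlive_ge2.
- apply: le_trans (TC_not_halted nlive_ge2) _; rewrite lee_fin /round_cost.
  apply: le_trans (_ : _ <= (4 * #|S| ^ 2)%:R * vol / ((nlive c) ^ 2)%:R) _; last first.
    by rewrite lerDr.
  have nlive_sqr_gt0 : 0 < ((nlive c) ^ 2)%:R :> R by rewrite ltr0n expn_gt0 nlive_c.
  by rewrite ler_pdivlMr // ler_pdivrMl ?prop_nonvoid_gt0 // mulrC nlive_sqr_le.
- have disabled : {in nonvoid_rxns, forall a, ~~ applicable a c}.
    move=> a; rewrite mem_filter => /andP[nvoid_a a_in]; apply/negP => app_a.
    by case: (mod_rxn_stepP a_in app_a) => [[void_a _]|[_ _ ? _]];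
      [rewrite void_a in nvoid_a | lia].
  apply: le_trans (TC_halted nlive_c disabled) _; rewrite lee_fin /round_cost.
  apply: le_trans (_ : _ <= 1) _; last by rewrite lerDl.
  by rewrite invf_le1 ?prop_total_ge1 // (lt_le_trans ltr01) ?prop_total_ge1.
Qed.

Lemma round_cost_nonincreasing v w : (1 <= v)%N -> (v <= w)%N -> round_cost w <= round_cost v.
Proof.
move=> v_ge1 le_vw; have w_ge1 := leq_trans v_ge1 le_vw.
rewrite /round_cost lerD2l; apply: ler_wpM2l; first by rewrite mulr_ge0 // ltW.
by rewrite lef_pV2 ?posrE ?ltr0n ?expn_gt0 ?v_ge1 ?w_ge1 // ler_nat leq_exp2r.
Qed.

Lemma sum_round_cost_le (f : nat -> nat) k n :
  (forall i, (i.+1 < k)%N -> (f i.+1 < f i)%N) -> (forall i, (1 <= f i <= n)%N) ->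
  \sum_(i < k) round_cost (f i) <= n%:R + 2 * ((4 * #|S| ^ 2)%:R * vol).
Proof.
move=> f_decr f_range; have f_ge1 i : (1 <= f i)%N by case/andP: (f_range i).
have le_kn : (k <= n)%N.
  case: k f_decr => // k f_decr; apply: leq_trans (decreasing_head_ge _ (f_ge1 k)) _.
    by move=> i; exact: f_decr.
  by case/andP: (f_range 0%N).
rewrite -(big_mkord xpredT (round_cost \o f)).
apply: le_trans (sum_decreasing_le round_cost_nonincreasing f_decr (fun i _ => f_ge1 i)) _.
rewrite /round_cost big_split /= sumr_const_nat subn0 -big_distrr /=.
apply: lerD; first by rewrite ler_nat.
rewrite [X in _ <= X]mulrC; apply: ler_wpM2l; first by rewrite mulr_ge0 // ltW.
apply: le_trans (sum_inv_sqr_le R k) _.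
by rewrite lerBlDr lerDl divr_ge0.
Qed.

Lemma rounds_TC_le (eta : execution S) sigma tr te tstar istar :
  @valid_init _ mod_CRD (ex_conf eta 0) -> weakly_fair mod_rxns eta ->
  skipping_policy sigma -> (forall i, te i = sigma (tr i)) ->
  (forall i, is_tau eta (te i) nonvoid_rxns (tr i.+1)) ->
  halting_step mod_rxns (@decision _ mod_CRD (psi (@input_of _ mod_CRD (ex_conf eta 0))))
    eta tstar ->
  (forall i, (i < istar)%N -> (tr i < tstar)%N) ->
  (\sum_(i < istar) TC_round (ex_conf eta (te i)) <=
    ((size1 (ex_conf eta 0))%:R + 2 * ((4 * #|S| ^ 2)%:R * vol))%:E)%E.
Proof.
move=> valid0 [eta_exec _] skip teE round_tau [_ not_halted] tr_lt.
pose f i := nlive (ex_conf eta (te i)).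
have f_range i : (1 <= f i <= size1 (ex_conf eta 0))%N.
  rewrite nlive_exec_gt0 ?nlive_init_gt0 //=.
  by rewrite -(size1_exec eta_exec (te i)) nlive_le_size1.
have f_decr i : (i.+1 < istar)%N -> (f i.+1 < f i)%N.
  move=> lt_i; have [tau_i _] := round_tau i; have [lt_te_tr _] := tau_i.
  have f_ge2 : (2 <= nlive (ex_conf eta (te i)))%N.
    rewrite ltnNge; apply/negP => f_le1.
    have f1 : nlive (ex_conf eta (te i)) = 1%N by have := f_range i; rewrite /f; lia.
    apply: (not_halted (te i)); first by have := tr_lt i.+1 lt_i; lia.
    exact: halting_at_nlive1 valid0 eta_exec f1.
  apply: leq_ltn_trans _ (nlive_round_drop eta_exec f_ge2 tau_i).
  by rewrite /f teE; exact: (nlive_exec_le eta_exec) (skip _).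
have f_gt0 i : (0 < nlive (ex_conf eta (te i)))%N by case/andP: (f_range i).
apply: (@le_trans _ _ (\sum_(i < istar) (round_cost (f i))%:E)%E).
  by apply: lee_sum => i _; exact: TC_round_le (f_gt0 i).
by rewrite sumEFin lee_fin sum_round_cost_le.
Qed.

End Runtime.

Lemma mod_CRD_runtime_linear (R : realType) (vol : nat -> R) :
  volume_theta_n vol -> halting_runtime_linear mod_CRD vol psi.
Proof.
move=> [c1 [c2 [c1_gt0 [c2_gt0 vol_bounds]]]].
pose K : R := (4 * #|S| ^ 2)%:R%R.
exists (1 + 2 * K * c2)%R, 1%N => n n_ge1.
have [vol_ge vol_le] := vol_bounds n n_ge1.
have vol_gt0 : (0 < vol n)%R by apply: lt_le_trans vol_ge; rewrite mulr_gt0 // ltr0n.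
exists (fun _ => nonvoid_rxns); split; first by move=> c a; rewrite mem_filter => /andP[].
move=> eta sigma valid0 size0 fair skip tr te tstar istar _ teE round_tau halt _ tr_lt.
apply: le_trans (rounds_TC_le vol_gt0 valid0 fair skip teE round_tau halt tr_lt) _.
by rewrite lee_fin size0 -/K; have K_ge0 : (0 <= K)%R by []; nra.
Qed.

End Predicate.
End ModuloCRD.

Lemma modulo_predicate_residues (Sigma : finType) (psi : (Sigma -> nat) -> bool) :
  modulo_predicate psi -> exists (Mp : nat) (vin : Sigma -> nat) (good : nat -> bool),
    (forall i, vin i < Mp.+1) /\ forall x, psi x = good ((\sum_i x i * vin i) %% Mp.+1).
Proof.
move=> [a [b [m [m_gt0 psiE]]]].
have m_neq0 : m != 0%R by rewrite lt0r_neq0.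
exists (`|m|%N).-1, (fun i => `|(a i %% m)%Z|%N), (fun u => ((u : int) == b %[mod m])%Z).
have mE : ((`|m|%N).-1.+1 : int) = m by lia.
split=> [i|x]; first by have := ltz_pmod (a i) m_gt0; have := modz_ge0 (a i) m_neq0; lia.
have -> : psi x = (\sum_i a i * (x i)%:Z == b %[mod m])%Z by apply/idP/idP => /psiE.
congr (_ == _); rewrite -modz_nat mE modz_mod -[in RHS]natz natr_sum.
under [in RHS]eq_bigr => i _ do rewrite natrM !natz abszE ger0_norm ?modz_ge0 //.
rewrite (eq_bigr (fun i => (x i)%:Z * (a i %/ m)%Z * m + (x i)%:Z * (a i %% m)%Z)%R).
  by rewrite big_split /= -big_distrl /= modzMDl.
by move=> i _; rewrite {1}(divz_eq (a i) m); ring.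
Qed.

Theorem proposition5p4 (R : realType) (Sigma : finType)
    (psi : (Sigma -> nat) -> bool) :
  modulo_predicate psi ->
  exists D : CRD Sigma,
    [/\ wf_CRD D, haltingly_decides D psi &
        forall vol : nat -> R, volume_theta_n vol ->
          halting_runtime_linear D vol psi].
Proof.
move=> /modulo_predicate_residues [Mp [vin [good [vin_lt psiE]]]].
exists (mod_CRD Mp vin good); split; first exact: wf_mod_CRD.
- exact: mod_CRD_decides.
- by move=> vol; exact: mod_CRD_runtime_linear.
Qed.
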